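(* Consider negligible unlearning cost ($\theta_i=0$ for all $i$), $d_i^{\max}=d^{\max}$ for all $i$, and $m_1<\dots<m_I$ with $m_i=(\xi_i\ell_i)^{-1}-\epsilon_i$. Let $d^a$ denote the unique Nash equilibrium of the allowing game. (1) Suppose some $j\in\mathcal I$ satisfies $(I-j)d^{\max}<m_j<(I-j+1)d^{\max}$ (so $d^a_i=0$ for $i<j$, $d^a_j=m_j-(I-j)d^{\max}\in(0,d^{\max})$, $d^a_i=d^{\max}$ for $i>j$), and $$\ln\frac{(I-j+1)d^{\max}+\epsilon_i}{(I-j)d^{\max}+\epsilon_i}\ge\xi_i\ell_i d^{\max}\quad\text{for all } i\in\{j,\dots,I\}.$$ Then the profile $d^f$ with $d^f_i=0$ for $i<j$ and $d^f_i=d^{\max}$ for $i\ge j$ is a Nash equilibrium of the forbidding game; user $j$'s payoff at $d^f$ is strictly lower than at $d^a$, every other user's payoff at $d^f$ is strictly higher than at $d^a$, and $\sum_i d^f_i>\sum_i d^a_i$. (2) Suppose some $j\in\mathcal I$ satisfies $(I-j)d^{\max}<m_j<(I-j+1)d^{\max}$ and $$\ln\frac{(I-j+1)d^{\max}+\epsilon_i}{(I-j)d^{\max}+\epsilon_i}\le\xi_i\ell_i d^{\max}\quad\text{for all } i\in\{1,\dots,j\}.$$ Then the profile $d^f$ with $d^f_i=0$ for $i\le j$ and $d^f_i=d^{\max}$ for $i>j$ is a Nash equilibrium of the forbidding game; every user's payoff at $d^f$ is strictly lower than at $d^a$, and $\sum_i d^f_i<\sum_i d^a_i$. (3) If no $j\in\mathcal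 I$ satisfies $(I-j)d^{\max}\le m_j\le(I-j+1)d^{\max}$, then $d^a$ (in which every user chooses $0$ or $d^{\max}$) is a Nash equilibrium of the forbidding game; hence all users' payoffs and the total remaining data size coincide in the two games at this equilibrium.
   Context: Allowing game (negligible unlearning cost): a finite set of users $\mathcal I=\{1,\dots,I\}$, $I\ge 2$, each with parameters $d_i^{\max}>0$, $\epsilon_i>0$, $\xi_i>0$, $\ell_i>0$; each user chooses $d_i\in[0,d_i^{\max}]$ (data kept), with payoff $U_i(d_i,\boldsymbol{d_{-i}})=\ln\big(\sum_{j\in\mathcal I}d_j+\epsilon_i\big)-\xi_i d_i\ell_i$. Under the stated hypotheses ($d_i^{\max}=d^{\max}$, strictly increasing $m_i$) this game has a unique Nash equilibrium. Forbidding game: same payoffs but strategy set $\{0,d_i^{\max}\}$ for each user $i$. In either game a (pure) Nash equilibrium is a profile from which no user can strictly increase its payoff by unilaterally switching to another strategy in its own strategy set. *)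

From HB Require Import structures.
From mathcomp Require Import all_boot all_order all_algebra.
From mathcomp Require Import all_classical all_reals all_analysis.
Set Implicit Arguments. Unset Strict Implicit. Unset Printing Implicit Defensive.
Import Order.TTheory GRing.Theory Num.Theory.
Local Open Scope ring_scope.

(* Users are the naturals 1..I (paper indexing); a profile is d : nat -> R,
   only its values at 1..I matter. *)
Section Game.
Variable R : realType.
Variable I : nat.
Variables (eps xi ell : nat -> R).

Definition total_data (d : nat -> R) : R := \sum_(1 <= k < I.+1) d k.

Definition ul_payoff (d : nat -> R) (i : nat) : R :=
  ln (total_data d + eps i) - xi i * d i * ell i.

Definition ul_upd (d : nat -> R) (i : nat) (x : R) : nat -> R :=
  fun k => if k == i then x else d k.

Definition ul_m (i : nat) : R := (xi i * ell i)^-1 - eps i.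

Definition ul_user (i : nat) : bool := (1 <= i <= I)%N.

Definition is_NE (S : nat -> R -> Prop) (d : nat -> R) : Prop :=
  (forall i, ul_user i -> S i (d i)) /\
  (forall i, ul_user i -> forall x, S i x -> ul_payoff (ul_upd d i x) i <= ul_payoff d i).

Definition allow_NE (dmaxv : nat -> R) (d : nat -> R) : Prop :=
  is_NE (fun i x => 0 <= x <= dmaxv i) d.

Definition forbid_NE (dmaxv : nat -> R) (d : nat -> R) : Prop :=
  is_NE (fun i x => x = 0 \/ x = dmaxv i) d.

End Game.

From HB Require Import structures.
From mathcomp Require Import all_boot all_order all_algebra.
From mathcomp Require Import all_classical all_reals all_analysis.
From mathcomp Require Import ring lra.
Set Implicit Arguments. Unset Strict Implicit. Unset Printing Implicit Defensive.
Import Order.TTheory GRing.Theory Num.Theory.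
Local Open Scope ring_scope.

(** With the other users' data fixed, user [i]'s payoff is, up to a constant,
    [ln t - xi i * ell i * t] with [t] the total plus [eps i]: strictly concave,
    peaking where the total equals [m i].  Hence in the allowing equilibrium a
    user keeps nothing when [m i] is below the total, everything when it is
    above, and an interior user pins the total at its own [m i]; as [m] is
    increasing, the interval condition on [m j] makes [j] that pivot.  The
    forbidding profiles differ from [d^a] only at the pivot, so the payoff
    comparisons amount to shifting the total (other users) or moving the pivot
    off its peak, while the equilibrium checks are the [ln]-ratio hypotheses on
    one side and concavity on the other.  Without a pivot, [d^a] is already
    two-valued and stays an equilibrium of the smaller game. *)

Lemma mulrS_natl (R : pzSemiRingType) n (x : R) : n.+1%:R * x = n%:R * x + x.
Proof. by rewrite -natr1 mulrDl mul1r. Qed.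

Section LnLinear.
Variable R : realType.
Implicit Types c u v x y z : R.

Lemma lt_ln1Dx x : -1 < x -> x != 0 -> ln (1 + x) < x.
Proof. by move=> N1x x0; rewrite -ltr_expR lnK ?expR_gt1Dx // posrE; lra. Qed.

Lemma ln_subr_lt y z : 0 < y -> 0 < z -> z != y -> ln z - ln y < (z - y) / y.
Proof.
move=> y0 z0 zy; rewrite -ln_div ?posrE //.
have -> : z / y = 1 + (z - y) / y by field; lra.
apply: lt_ln1Dx; last by rewrite mulf_neq0 ?subr_eq0 // invr_eq0 gt_eqF.
have -> : (z - y) / y = z / y - 1 by field; lra.
by have := divr_gt0 z0 y0; lra.
Qed.

Lemma ln_sub_mul_lt c u v : 0 < u -> 0 < v -> u != v ->
  0 <= (u - v) * (1 - c * u) -> ln v - c * v < ln u - c * u.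
Proof.
move=> u0 v0 uv huv; have := ln_subr_lt u0 v0; rewrite eq_sym => /(_ uv).
have : 0 <= (u - v) * (1 - c * u) / u by rewrite divr_ge0 // ltW.
have -> : (u - v) * (1 - c * u) / u = c * (v - u) - (v - u) / u by field; lra.
lra.
Qed.

End LnLinear.

Section Game.
Variables (R : realType) (I : nat) (eps xi ell : nat -> R).
Implicit Types (d : nat -> R) (x y : R).

Local Notation total := (total_data I).
Local Notation payoff := (ul_payoff I eps xi ell).
Local Notation user := (ul_user I).
Local Notation m := (ul_m eps xi ell).

Lemma total_data_eq d d' : (forall k, user k -> d k = d' k) -> total d = total d'.
Proof. by move=> h; apply: eq_big_nat => k /h. Qed.

Lemma total_data_le d d' : (forall k, user k -> d k <= d' k) -> total d <= total d'.
Proof. by move=> h; apply: ler_sum_nat => k /h. Qed.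

Lemma total_data_upd d i x : user i -> total (ul_upd d i x) = total d - d i + x.
Proof.
move=> ui; have iI : i \in index_iota 1 I.+1 by rewrite mem_index_iota.
rewrite /total_data !(bigD1_seq i) ?iota_uniq //= /ul_upd eqxx.
by rewrite (eq_bigr d) => [|k /negbTE ->]; first ring.
Qed.

Lemma ul_upd_id d i : ul_upd d i (d i) = d.
Proof. by apply/funext => k; rewrite /ul_upd; case: eqP => [->|]. Qed.

Lemma ul_payoff_eq d d' i :
  (forall k, user k -> d k = d' k) -> user i -> payoff d i = payoff d' i.
Proof. by move=> h ui; rewrite /ul_payoff (total_data_eq h) h. Qed.

Lemma ul_payoff_upd d i x : user i ->
  payoff (ul_upd d i x) i = ln (total d - d i + x + eps i) - xi i * x * ell i.
Proof. by move=> ui; rewrite /ul_payoff total_data_upd // /ul_upd eqxx. Qed.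

Lemma ul_payoff_lt_total d d' i : d i = d' i -> 0 < total d + eps i ->
  total d < total d' -> payoff d i < payoff d' i.
Proof.
by move=> di S0 lt_dd'; rewrite /ul_payoff di ltrD2r ltr_ln ?posrE; lra.
Qed.

Lemma mul_ul_m_addr i : xi i * ell i != 0 -> xi i * ell i * (m i + eps i) = 1.
Proof. by move=> c0; rewrite /ul_m subrK mulfV. Qed.

(* Moving from [y] to [x] strictly pays off when the resulting total lies on
   the side of [m i] towards which the move goes. *)
Lemma ul_payoff_upd_lt d i x y : 0 < xi i * ell i -> user i ->
  0 < total d - d i + x + eps i -> 0 < total d - d i + y + eps i -> x != y ->
  0 <= (x - y) * (m i - (total d - d i + x)) ->
  payoff (ul_upd d i y) i < payoff (ul_upd d i x) i.
Proof.
move=> c0 ui ux uy xy h; rewrite !ul_payoff_upd //.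
set s := total d - d i in ux uy h *; set c := xi i * ell i.
have uv : s + x + eps i != s + y + eps i.
  by apply: contra xy => /eqP e; apply/eqP; lra.
have e1 : 1 - c * (s + x + eps i) = c * (m i - (s + x)).
  by have := mul_ul_m_addr (lt0r_neq0 c0); rewrite -/c; lra.
have hc : 0 <= (s + x + eps i - (s + y + eps i)) * (1 - c * (s + x + eps i)).
  rewrite e1 (_ : _ - _ = x - y); last by ring.
  by rewrite mulrCA mulr_ge0 // ltW.
have := ln_sub_mul_lt ux uy uv hc.
rewrite /c (mulrAC (xi i) x) (mulrAC (xi i) y); lra.
Qed.

Definition step_profile (j : nat) (c : R) : nat -> R :=
  fun k => if (k < j)%N then 0 else c.

Lemma total_data_step j c : (1 <= j <= I.+1)%N ->
  total (step_profile j c) = (I.+1 - j)%:R * c.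
Proof.
case/andP=> j1 jI; rewrite /total_data (big_cat_nat j1 jI) /=.
rewrite big1_seq => [|k]; last first.
  by rewrite mem_index_iota /step_profile => /andP[_ /andP[_ ->]].
rewrite add0r (eq_big_nat _ _ (F2 := fun _ => c)) => [|k /andP[jk _]]; last first.
  by rewrite /step_profile ltnNge jk.
by rewrite sumr_const_nat mulr_natl.
Qed.

Lemma ul_upd_step_succ j c x :
  ul_upd (step_profile j.+1 c) j x = ul_upd (step_profile j c) j x.
Proof.
apply/funext => k; rewrite /ul_upd /step_profile ltnS.
by case: eqP => // /eqP kj; rewrite leq_eqVlt (negbTE kj).
Qed.

Lemma forbid_NE_step (dmaxv : nat -> R) j c :
  (forall i, user i -> dmaxv i = c) ->
  (forall i, user i -> (i < j)%N ->
     payoff (ul_upd (step_profile j c) i c) i <= payoff (step_profile j c) i) ->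
  (forall i, user i -> (j <= i)%N ->
     payoff (ul_upd (step_profile j c) i 0) i <= payoff (step_profile j c) i) ->
  forbid_NE I eps xi ell dmaxv (step_profile j c).
Proof.
move=> hc lo hi; split=> i ui; rewrite hc //.
  by rewrite /step_profile; case: ltnP; [left | right].
have [ij|ji] := ltnP i j; move=> x [|] ->.
- have di : step_profile j c i = 0 by rewrite /step_profile ij.
  by rewrite -[X in ul_upd _ _ X]di ul_upd_id.
- exact: lo.
- exact: hi.
- have di : step_profile j c i = c by rewrite /step_profile ltnNge ji.
  by rewrite -[X in ul_upd _ _ X]di ul_upd_id.
Qed.

Lemma forbid_NE_of_allow_NE (dmaxv d : nat -> R) :
  (forall i, user i -> 0 <= dmaxv i) ->
  (forall i, user i -> d i = 0 \/ d i = dmaxv i) ->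
  allow_NE I eps xi ell dmaxv d -> forbid_NE I eps xi ell dmaxv d.
Proof.
move=> dm0 hd [_ hNE]; split=> // i ui x hx; apply: hNE => //.
by case: hx => ->; rewrite ?lexx dm0.
Qed.

End Game.

Section AllowingGame.
Variables (R : realType) (I : nat) (dmaxv eps xi ell d : nat -> R).
Hypothesis eps_gt0 : forall i, ul_user I i -> 0 < eps i.
Hypothesis cost_gt0 : forall i, ul_user I i -> 0 < xi i * ell i.
Hypothesis dNE : allow_NE I eps xi ell dmaxv d.

Local Notation total := (total_data I d).
Local Notation payoff := (ul_payoff I eps xi ell).
Local Notation user := (ul_user I).
Local Notation m := (ul_m eps xi ell).

Lemma allow_NE_bounds i : user i -> 0 <= d i <= dmaxv i.
Proof. by case: dNE => h _ /h. Qed.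

Lemma allow_NE_others_ge0 i : user i -> 0 <= total - d i.
Proof.
move=> ui; rewrite -[_ - _]addr0 -total_data_upd // /total_data big_seq.
apply: sumr_ge0 => k; rewrite mem_index_iota => uk; rewrite /ul_upd.
by case: eqP => _ //; case/andP: (allow_NE_bounds uk).
Qed.

Lemma allow_NE_max i : user i -> total < m i -> d i = dmaxv i.
Proof.
move=> ui lt_m; have /andP[d0 ddm] := allow_NE_bounds ui.
apply/eqP; rewrite eq_le ddm /= leNgt; apply/negP => lt_dm.
have [x [dx xdm xm]] : exists x, [/\ d i < x, x <= dmaxv i & total - d i + x <= m i].
  have [h|h] := lerP (dmaxv i) (d i + (m i - total)).
  - by exists (dmaxv i); split => //; lra.
  - by exists (d i + (m i - total)); split; lra.
have s0 := allow_NE_others_ge0 ui; have e0 := eps_gt0 ui.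
suff : payoff d i < payoff (ul_upd d i x) i.
  by rewrite ltNge (proj2 dNE) // xdm (le_trans d0 (ltW dx)).
rewrite -{1}(ul_upd_id d i).
apply: ul_payoff_upd_lt (cost_gt0 ui) ui _ _ _ _; try lra.
by apply: mulr_ge0; lra.
Qed.

Lemma allow_NE_zero i : user i -> m i < total -> d i = 0.
Proof.
move=> ui gt_m; have /andP[d0 ddm] := allow_NE_bounds ui.
apply/eqP; rewrite eq_le d0 andbT leNgt; apply/negP => gt_d0.
have [x [x0 xd xm]] : exists x, [/\ 0 <= x, x < d i & m i <= total - d i + x].
  have [h|h] := lerP (d i - (total - m i)) 0.
  - by exists 0; split => //; lra.
  - by exists (d i - (total - m i)); split; lra.
have s0 := allow_NE_others_ge0 ui; have e0 := eps_gt0 ui.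
suff : payoff d i < payoff (ul_upd d i x) i.
  by rewrite ltNge (proj2 dNE) // x0 (le_trans (ltW xd) ddm).
rewrite -{1}(ul_upd_id d i).
apply: ul_payoff_upd_lt (cost_gt0 ui) ui _ _ _ _; try lra.
by apply: mulr_le0; lra.
Qed.

End AllowingGame.

Section ConstantCapacity.
Variables (R : realType) (I : nat) (dmaxv eps xi ell : nat -> R) (dmax : R).
Variable da : nat -> R.
Hypothesis eps_gt0 : forall i, ul_user I i -> 0 < eps i.
Hypothesis cost_gt0 : forall i, ul_user I i -> 0 < xi i * ell i.
Hypothesis dmaxvE : forall i, ul_user I i -> dmaxv i = dmax.
Hypothesis m_incr :
  forall i, (1 <= i)%N -> (i < I)%N -> ul_m eps xi ell i < ul_m eps xi ell i.+1.
Hypothesis daNE : allow_NE I eps xi ell dmaxv da.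

Local Notation total := (total_data I).
Local Notation payoff := (ul_payoff I eps xi ell).
Local Notation user := (ul_user I).
Local Notation m := (ul_m eps xi ell).

Lemma ul_m_lt k l : user k -> user l -> (k < l)%N -> m k < m l.
Proof.
move=> uk ul; apply: (homo_ltn_in (D := ul_user I) (f := m) (@lt_trans _ _)) => //.
- move=> a b /andP[a1 aI] /andP[b1 bI] c /andP[ac cb].
  by apply/andP; rewrite (leq_trans a1 (ltnW ac)) (leq_trans (ltnW cb) bI).
- by move=> a /andP[a1 aI] /andP[_ aI']; apply: m_incr.
Qed.

Lemma allow_NE_le_max k : user k -> da k <= dmax.
Proof. by move=> uk; rewrite -(dmaxvE uk); case/andP: (allow_NE_bounds daNE uk). Qed.

Section Pivot.
Variable j : nat.
Hypothesis uj : user j.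
Hypothesis total_eq_m : total da = m j.

Lemma allow_NE_below k : user k -> (k < j)%N -> da k = 0.
Proof.
move=> uk kj; apply: (allow_NE_zero eps_gt0 cost_gt0 daNE uk).
by rewrite total_eq_m ul_m_lt.
Qed.

Lemma allow_NE_above k : user k -> (j < k)%N -> da k = dmax.
Proof.
move=> uk jk; rewrite -(dmaxvE uk).
by apply: (allow_NE_max eps_gt0 cost_gt0 daNE uk); rewrite total_eq_m ul_m_lt.
Qed.

Lemma allow_NE_off_pivot k :
  user k -> da k = ul_upd (step_profile j dmax) j (da j) k.
Proof.
move=> uk; rewrite /ul_upd /step_profile; case: eqP => [->//|/eqP kj].
case: ltnP => [|jk]; first exact: allow_NE_below.
by apply: allow_NE_above uk _; rewrite ltn_neqAle eq_sym kj.
Qed.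

Lemma allow_NE_pivot : da j = m j - (I - j)%:R * dmax.
Proof.
have /andP[j1 jI] := uj.
have := total_data_upd (step_profile j dmax) (da j) uj.
rewrite -(total_data_eq allow_NE_off_pivot) total_eq_m total_data_step ?j1 ?leqW //.
by rewrite /step_profile ltnn subSn // mulrS_natl; lra.
Qed.

End Pivot.

Lemma allow_NE_total_eq_m j : user j ->
  (I - j)%:R * dmax < m j < (I - j).+1%:R * dmax -> total da = m j.
Proof.
move=> uj; have /andP[j1 jI] := uj.
rewrite mulrS_natl => /andP[lo hi].
have [lt_m|gt_m|//] := ltgtP (total da) (m j).
- have : total (step_profile j dmax) <= total da.
    apply: total_data_le => k uk; rewrite /step_profile; case: ltnP => jk.
      by case/andP: (allow_NE_bounds daNE uk).
    rewrite -(dmaxvE uk) (allow_NE_max eps_gt0 cost_gt0 daNE uk) //.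
    apply: lt_le_trans lt_m _; move: jk; rewrite leq_eqVlt => /predU1P[->//|jk].
    exact/ltW/(ul_m_lt uj uk jk).
  by rewrite total_data_step ?j1 ?leqW // subSn // mulrS_natl; lra.
- have : total da <= total (step_profile j.+1 dmax).
    apply: total_data_le => k uk; rewrite /step_profile; case: ltnP => kj.
      rewrite (allow_NE_zero eps_gt0 cost_gt0 daNE uk) //.
      apply: le_lt_trans gt_m; move: kj; rewrite ltnS leq_eqVlt => /predU1P[->//|kj].
      exact/ltW/(ul_m_lt uk uj kj).
    exact: allow_NE_le_max.
  by rewrite total_data_step ?subSS //; lra.
Qed.

Lemma forbid_NE_pivot_max j : user j ->
  (I - j)%:R * dmax < m j < (I - j).+1%:R * dmax ->
  (forall i, (j <= i <= I)%N ->
     xi i * ell i * dmax <=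
     ln (((I - j).+1%:R * dmax + eps i) / ((I - j)%:R * dmax + eps i))) ->
  [/\ forbid_NE I eps xi ell dmaxv (step_profile j dmax),
      payoff (step_profile j dmax) j < payoff da j,
      (forall i, user i -> i != j -> payoff da i < payoff (step_profile j dmax) i)
    & total da < total (step_profile j dmax)].
Proof.
move=> uj hmj hln; have /andP[j1 jI] := uj.
have Sm := allow_NE_total_eq_m uj hmj.
have hda := allow_NE_off_pivot uj Sm; have daj := allow_NE_pivot uj Sm.
set T0 := (I - j)%:R * dmax in hmj hln daj.
have Tdf : total (step_profile j dmax) = T0 + dmax.
  by rewrite total_data_step ?j1 ?leqW // subSn // mulrS_natl.
move: hmj; rewrite mulrS_natl -/T0 => /andP[lo hi].
have dm0 : 0 < dmax by lra.
have T00 : 0 <= T0 by rewrite mulr_ge0 ?ler0n ?ltW.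
split.
- apply: forbid_NE_step => // i ui ij; have e0 := eps_gt0 ui.
  + have dfi : step_profile j dmax i = 0 by rewrite /step_profile ij.
    have mij := ul_m_lt ui uj ij.
    rewrite -{2}(ul_upd_id (step_profile j dmax) i) dfi; apply/ltW.
    apply: ul_payoff_upd_lt (cost_gt0 ui) ui _ _ _ _; rewrite ?Tdf ?dfi; try lra.
    by apply: mulr_le0; lra.
  + have dfi : step_profile j dmax i = dmax by rewrite /step_profile ltnNge ij.
    have /andP[_ iI] := ui; have := hln i (introT andP (conj ij iI)).
    rewrite ul_payoff_upd // /ul_payoff Tdf dfi addrK addr0 mulrS_natl -/T0.
    rewrite ln_div ?posrE; lra.
- have dfj : step_profile j dmax j = dmax by rewrite /step_profile ltnn.
  have e0 := eps_gt0 uj.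
  rewrite (ul_payoff_eq eps xi ell hda uj).
  rewrite -{1}(ul_upd_id (step_profile j dmax) j) dfj.
  by apply: ul_payoff_upd_lt (cost_gt0 uj) uj _ _ _ _; rewrite ?Tdf ?dfj ?daj; lra.
- move=> i ui ij; have e0 := eps_gt0 ui.
  apply: (ul_payoff_lt_total xi ell); rewrite ?Sm ?Tdf; try lra.
  by rewrite hda // /ul_upd (negbTE ij).
- by rewrite Sm Tdf.
Qed.

Lemma forbid_NE_pivot_zero j : user j ->
  (I - j)%:R * dmax < m j < (I - j).+1%:R * dmax ->
  (forall i, (1 <= i <= j)%N ->
     ln (((I - j).+1%:R * dmax + eps i) / ((I - j)%:R * dmax + eps i))
     <= xi i * ell i * dmax) ->
  [/\ forbid_NE I eps xi ell dmaxv (step_profile j.+1 dmax),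
      (forall i, user i -> payoff (step_profile j.+1 dmax) i < payoff da i)
    & total (step_profile j.+1 dmax) < total da].
Proof.
move=> uj hmj hln; have /andP[j1 jI] := uj.
have Sm := allow_NE_total_eq_m uj hmj.
have hda := allow_NE_off_pivot uj Sm; have daj := allow_NE_pivot uj Sm.
rewrite -ul_upd_step_succ in hda.
set T0 := (I - j)%:R * dmax in hmj hln daj.
have Tdf : total (step_profile j.+1 dmax) = T0.
  by rewrite total_data_step ?ltnS ?jI ?subSS.
move: hmj; rewrite mulrS_natl -/T0 => /andP[lo hi].
have dm0 : 0 < dmax by lra.
have T00 : 0 <= T0 by rewrite mulr_ge0 ?ler0n ?ltW.
split.
- apply: forbid_NE_step => // i ui ij; have e0 := eps_gt0 ui.
  + have dfi : step_profile j.+1 dmax i = 0 by rewrite /step_profile ij.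
    have /andP[i1 _] := ui; have := hln i (introT andP (conj i1 ij)).
    rewrite ul_payoff_upd // /ul_payoff Tdf dfi subr0 mulrS_natl -/T0.
    rewrite ln_div ?posrE; lra.
  + have dfi : step_profile j.+1 dmax i = dmax by rewrite /step_profile ltnNge ij.
    have mji := ul_m_lt uj ui ij.
    have T0d : dmax <= T0.
      apply: ler_peMl; first exact: ltW.
      by rewrite ler1n subn_gt0; case/andP: ui => _; exact: leq_trans ij.
    rewrite -{2}(ul_upd_id (step_profile j.+1 dmax) i) dfi; apply/ltW.
    apply: ul_payoff_upd_lt (cost_gt0 ui) ui _ _ _ _; rewrite ?Tdf ?dfi; try lra.
    by apply: mulr_ge0; lra.
- move=> i ui; have e0 := eps_gt0 ui.
  have [->|ij] := eqVneq i j.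
  + have dfj : step_profile j.+1 dmax j = 0 by rewrite /step_profile ltnSn.
    have ej := eps_gt0 uj.
    rewrite (ul_payoff_eq eps xi ell hda uj).
    rewrite -{1}(ul_upd_id (step_profile j.+1 dmax) j) dfj.
    by apply: ul_payoff_upd_lt (cost_gt0 uj) uj _ _ _ _; rewrite ?Tdf ?dfj ?daj; lra.
  + apply: (ul_payoff_lt_total xi ell); rewrite ?Sm ?Tdf; try lra.
    by rewrite hda // /ul_upd (negbTE ij).
- by rewrite Sm Tdf.
Qed.

Lemma allow_NE_extreme :
  (forall j, user j -> ~ ((I - j)%:R * dmax <= m j <= (I - j).+1%:R * dmax)) ->
  forall i, user i -> da i = 0 \/ da i = dmax.
Proof.
move=> hno i ui; have /andP[d0 _] := allow_NE_bounds daNE ui.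
have ddm := allow_NE_le_max ui.
have [dpos|dle] := ltrP 0 (da i); last by left; apply/eqP; rewrite eq_le dle d0.
have [dlt|dge] := ltrP (da i) dmax; last by right; apply/eqP; rewrite eq_le ddm dge.
have Sm : total da = m i.
  apply/eqP; rewrite eq_le !leNgt; apply/andP; split; apply/negP.
  - by move=> /(allow_NE_zero eps_gt0 cost_gt0 daNE ui); lra.
  - by move=> /(allow_NE_max eps_gt0 cost_gt0 daNE ui); rewrite dmaxvE //; lra.
have dai := allow_NE_pivot ui Sm; exfalso; apply: (hno i ui).
by rewrite mulrS_natl; apply/andP; split; lra.
Qed.

End ConstantCapacity.

Theorem corollary2 (R : realType) (I : nat) (dmaxv eps xi ell : nat -> R)
    (dmax : R) (da : nat -> R) :
  (2 <= I)%N ->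
  (forall i, ul_user I i ->
     [/\ 0 < dmaxv i, 0 < eps i, 0 < xi i & 0 < ell i]) ->
  (forall i, ul_user I i -> dmaxv i = dmax) ->
  (forall i, (1 <= i)%N -> (i < I)%N -> ul_m eps xi ell i < ul_m eps xi ell i.+1) ->
  allow_NE I eps xi ell dmaxv da ->
  [/\
  (forall j, ul_user I j ->
     (I - j)%:R * dmax < ul_m eps xi ell j < (I - j).+1%:R * dmax ->
     (forall i, (j <= i <= I)%N ->
        xi i * ell i * dmax <=
        ln (((I - j).+1%:R * dmax + eps i) / ((I - j)%:R * dmax + eps i))) ->
     let df := fun i : nat => if (i < j)%N then 0 else dmax in
     [/\ forbid_NE I eps xi ell dmaxv df,
         ul_payoff I eps xi ell df j < ul_payoff I eps xi ell da j,
         (forall i, ul_user I i -> i != j ->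
            ul_payoff I eps xi ell da i < ul_payoff I eps xi ell df i)
       & total_data I da < total_data I df]),
  (forall j, ul_user I j ->
     (I - j)%:R * dmax < ul_m eps xi ell j < (I - j).+1%:R * dmax ->
     (forall i, (1 <= i <= j)%N ->
        ln (((I - j).+1%:R * dmax + eps i) / ((I - j)%:R * dmax + eps i))
        <= xi i * ell i * dmax) ->
     let df := fun i : nat => if (i <= j)%N then 0 else dmax in
     [/\ forbid_NE I eps xi ell dmaxv df,
         (forall i, ul_user I i ->
            ul_payoff I eps xi ell df i < ul_payoff I eps xi ell da i)
       & total_data I df < total_data I da])
  &
  ((forall j, ul_user I j ->
      ~ ((I - j)%:R * dmax <= ul_m eps xi ell j <= (I - j).+1%:R * dmax)) ->
   (forall i, ul_user I i -> da i = 0 \/ da i = dmax) /\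
   forbid_NE I eps xi ell dmaxv da)].
Proof.
move=> _ hpos hdm hmon hNE.
have eps_gt0 i : ul_user I i -> 0 < eps i by case/hpos.
have cost_gt0 i : ul_user I i -> 0 < xi i * ell i.
  by case/hpos => _ _ xi0 ell0; exact: mulr_gt0.
split.
- move=> j uj hmj hln.
  exact: (forbid_NE_pivot_max eps_gt0 cost_gt0 hdm hmon hNE uj hmj hln).
- move=> j uj hmj hln.
  exact: (forbid_NE_pivot_zero eps_gt0 cost_gt0 hdm hmon hNE uj hmj hln).
- move=> hno; have hda := allow_NE_extreme eps_gt0 cost_gt0 hdm hmon hNE hno.
  split=> //; apply: forbid_NE_of_allow_NE hNE => i ui.
  + by case: (hpos i ui) => /ltW.
  + by rewrite hdm //; exact: hda.
Qed.
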